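(* Let $S^0\subset X$ and let $\mu^0$ be a stationary policy such that $f(x,\mu^0(x))\in S^0$ for all $x\in S^0$. Define $\bar J_{S^0}:X\to[0,\infty]$ by $\bar J_{S^0}(x)=J_{\mu^0}(x)$ if $x\in S^0$ and $\bar J_{S^0}(x)=\infty$ otherwise. Fix an integer $\ell\ge 1$, and let $\tilde J_{S^0}$ and the rollout policy $\tilde\mu$ be defined from $\bar J_{S^0}$ as in the context. Then $$J_{\tilde\mu}(x)\le \tilde J_{S^0}(x)\le \bar J_{S^0}(x)\quad\text{for all }x\in X.$$
   Context: Deterministic infinite-horizon problem: arbitrary state space $X$ and control space $U$, dynamics $x_{k+1}=f(x_k,u_k)$ with $f:X\times U\to X$, nonempty control constraint sets $U(x)\subset U$, and stage cost $g(x,u)\in[0,\infty]$ for all $x\in X$, $u\in U(x)$ (the value $\infty$ is allowed). A stationary policy is a map $\mu:X\to U$ with $\mu(x)\in U(x)$ for all $x$. Its cost function is $J_\mu(x_0)=\sum_{k=0}^\infty g(x_k,\mu(x_k))\in[0,\infty]$, where $x_{k+1}=f(x_k,\mu(x_k))$. Standing assumption (Assumption 1): for every function $J:X\to[0,\infty]$ and every $x\in X$, the infimum $\inf_{u\in U(x)}\{g(x,u)+J(f(x,u))\}$ is attained. Rollout: given a terminal function $\bar J:X\to[0,\infty]$ and an integer $\ell\ge1$, for $x\in X$ let $\tilde J(x)$ be the optimal value of the problem of minimizing $\sum_{k=0}^{\ell-1}g(x_k,u_k)+\bar J(x_\ell)$ over $(u_0,\dots,u_{\ell-1})$ subject to $x_0=x$,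 $x_{k+1}=f(x_k,u_k)$, $u_k\in U(x_k)$ for $k=0,\dots,\ell-1$. Equivalently, $\tilde J=J_\ell$ where $J_0=\bar J$ and $J_{k+1}(x)=\min_{u\in U(x)}\{g(x,u)+J_k(f(x,u))\}$. The rollout policy $\tilde\mu$ is defined by $\tilde\mu(x)=\tilde u_0$, where $(\tilde u_0,\dots,\tilde u_{\ell-1})$ is a minimizing sequence of this problem at $x$; equivalently, $\tilde\mu(x)\in\arg\min_{u\in U(x)}\{g(x,u)+J_{\ell-1}(f(x,u))\}$. When $\bar J=\bar J_{S^0}$ the optimal value is denoted $\tilde J_{S^0}$. *)

From HB Require Import structures.
From mathcomp Require Import all_boot all_order all_algebra.
From mathcomp Require Import all_classical all_reals all_analysis.
Set Implicit Arguments. Unset Strict Implicit. Unset Printing Implicit Defensive.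
Import Order.TTheory GRing.Theory Num.Theory.
Local Open Scope classical_set_scope.
Local Open Scope ereal_scope.

Section DP.
Context {R : realType} {X U : Type}.
Variables (f : X -> U -> X) (Uc : X -> set U) (g : X -> U -> \bar R).

Definition is_policy (mu : X -> U) : Prop := forall x, Uc x (mu x).

Fixpoint traj (mu : X -> U) (x0 : X) (k : nat) : X :=
  match k with
  | 0%N => x0
  | k'.+1 => let y := traj mu x0 k' in f y (mu y)
  end.

Definition Jpol (mu : X -> U) (x0 : X) : \bar R :=
  \sum_(k <oo) g (traj mu x0 k) (mu (traj mu x0 k)).

Definition bellman (J : X -> \bar R) (x : X) : \bar R :=
  ereal_inf [set g x u + J (f x u) | u in Uc x].

(* J_k = T^k Jbar ; the l-step lookahead value is J_l *)
Fixpoint VI (Jbar : X -> \bar R) (k : nat) : X -> \bar R :=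
  match k with
  | 0%N => Jbar
  | k'.+1 => bellman (VI Jbar k')
  end.

Definition assumption1 : Prop :=
  forall J : X -> \bar R, (forall x, 0 <= J x) ->
  forall x, exists2 u, Uc x u & g x u + J (f x u) = bellman J x.

Definition JbarS (S0 : set X) (mu0 : X -> U) (x : X) : \bar R :=
  if x \in S0 then Jpol mu0 x else +oo.

Definition is_rollout (Jbar : X -> \bar R) (l : nat) (mu : X -> U) : Prop :=
  is_policy mu /\
  forall x, g x (mu x) + VI Jbar l.-1 (f x (mu x)) = VI Jbar l x.

End DP.

From HB Require Import structures.
From mathcomp Require Import all_boot all_order all_algebra.
From mathcomp Require Import all_classical all_reals all_analysis.
Import Order.TTheory GRing.Theory Num.Theory.
Local Open Scope classical_set_scope.
Local Open Scope ereal_scope.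

(* Write T for the Bellman operator and J_k = T^k Jbar.  The proof rests on
   two general facts about nonnegative costs in [0, +oo]:
   (a) if T Jbar <= Jbar, then by monotonicity of T the sequence J_k is
       nonincreasing, so J_l <= J_(l-1) <= ... <= Jbar;
   (b) (verification lemma) if a policy mu and a function V >= 0 satisfy the
       one-step descent g(x, mu x) + V(f(x, mu x)) <= V(x) everywhere, then
       J_mu <= V, since every partial sum of the cost plus V at the current
       state is bounded by V(x).
   For Jbar = Jbar_{S0}, invariance of S0 under mu0 and the cost recursion
   J_mu0(x) = g(x, mu0 x) + J_mu0(f(x, mu0 x)) give T Jbar <= Jbar.  Then
   (a) gives J_l <= Jbar, and the rollout identity
   g(x, mu~ x) + J_(l-1)(f(x, mu~ x)) = J_l(x) together with J_l <= J_(l-1)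
   gives the descent inequality for V = J_l, so (b) yields J_mu~ <= J_l. *)

Section RolloutBounds.
Context {R : realType} {X U : Type}.
Variables (f : X -> U -> X) (Uc : X -> set U) (g : X -> U -> \bar R).
Hypothesis g_ge0 : forall x u, Uc x u -> 0 <= g x u.

Lemma traj_succ (mu : X -> U) x k :
  traj f mu x k.+1 = traj f mu (f x (mu x)) k.
Proof. by elim: k => [|k IH] //=; rewrite -IH. Qed.

Lemma Jpol_ge0 mu : is_policy Uc mu -> forall x, 0 <= Jpol f g mu x.
Proof. by move=> mu_pol x; apply: nneseries_ge0 => n _ _; exact: g_ge0. Qed.

Lemma Jpol_step mu : is_policy Uc mu -> forall x,
  Jpol f g mu x = g x (mu x) + Jpol f g mu (f x (mu x)).
Proof.
move=> mu_pol x; rewrite /Jpol nneseries_recl //; last by move=> k _; exact: g_ge0.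
congr (_ + _); rewrite -nneseries_addn; last by move=> i; exact: g_ge0.
by apply: eq_eseriesr => i _; rewrite addn1 traj_succ.
Qed.

Lemma bellman_le J x u : Uc x u -> bellman f Uc g J x <= g x u + J (f x u).
Proof. by move=> Uxu; apply: ereal_inf_lbound; exists u. Qed.

Lemma bellman_ge0 J : (forall y, 0 <= J y) -> forall x, 0 <= bellman f Uc g J x.
Proof.
move=> J_ge0 x; apply/ereal_infP => _ [u Uxu <-].
by apply: adde_ge0; [exact: g_ge0 | exact: J_ge0].
Qed.

Lemma bellman_mono J1 J2 : (forall y, J1 y <= J2 y) ->
  forall x, bellman f Uc g J1 x <= bellman f Uc g J2 x.
Proof.
move=> le_J x; rewrite {2}/bellman; apply/ereal_infP => _ [u Uxu <-].
by apply: le_trans (bellman_le J1 x u Uxu) _; apply: leeD.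
Qed.

Lemma VI_ge0 J : (forall y, 0 <= J y) -> forall k x, 0 <= VI f Uc g J k x.
Proof. by move=> J_ge0; elim=> [|k IH] x //=; exact: bellman_ge0. Qed.

Lemma VI_succ_le J : (forall x, bellman f Uc g J x <= J x) ->
  forall k x, VI f Uc g J k.+1 x <= VI f Uc g J k x.
Proof.
move=> TJ_le; elim=> [|k IH] x; first exact: TJ_le.
by rewrite [VI _ _ _ _ k.+2 _]/=; exact: bellman_mono.
Qed.

Lemma VI_le_terminal J : (forall x, bellman f Uc g J x <= J x) ->
  forall k x, VI f Uc g J k x <= J x.
Proof.
move=> TJ_le; elim=> [|k IH] x //.
exact: le_trans (VI_succ_le J TJ_le k x) (IH x).
Qed.

Section Verification.
Variables (mu : X -> U) (V : X -> \bar R).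
Hypothesis mu_pol : is_policy Uc mu.
Hypothesis V_ge0 : forall x, 0 <= V x.
Hypothesis descent : forall x, g x (mu x) + V (f x (mu x)) <= V x.

Lemma partial_cost_le x n :
  \sum_(0 <= k < n) g (traj f mu x k) (mu (traj f mu x k))
    + V (traj f mu x n) <= V x.
Proof.
elim: n => [|n IH]; first by rewrite big_geq // add0e.
rewrite big_nat_recr //= -addeA; apply: le_trans IH.
by apply: leeD => //; exact: descent.
Qed.

Lemma Jpol_le_descent x : Jpol f g mu x <= V x.
Proof.
apply: lime_le; first by apply: is_cvg_nneseries => n _ _; exact: g_ge0.
apply: nearW => n; apply: le_trans (partial_cost_le x n).
by rewrite -[X in X <= _]adde0; apply: leeD.
Qed.

End Verification.

Section TerminalCost.
Variables (S0 : set X) (mu0 : X -> U).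
Hypothesis mu0_pol : is_policy Uc mu0.
Hypothesis S0_inv : forall x, S0 x -> S0 (f x (mu0 x)).

Lemma JbarS_ge0 x : 0 <= JbarS f g S0 mu0 x.
Proof. by rewrite /JbarS; case: ifP => _ //; exact: Jpol_ge0. Qed.

(* Jbar_{S0} is excessive: on S0 the control mu0 keeps the state in S0 and
   realizes the cost recursion; off S0 the bound +oo is trivial. *)
Lemma JbarS_excessive x :
  bellman f Uc g (JbarS f g S0 mu0) x <= JbarS f g S0 mu0 x.
Proof.
rewrite {2}/JbarS; case: ifPn => [/set_mem S0x|_]; last by rewrite leey.
apply: le_trans (bellman_le _ x (mu0 x) (mu0_pol x)) _.
rewrite (Jpol_step mu0 mu0_pol x) /JbarS.
by rewrite (mem_set (S0_inv x S0x)).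
Qed.

End TerminalCost.

Lemma rollout_descent J l mu : (1 <= l)%N ->
  (forall x, bellman f Uc g J x <= J x) -> is_rollout f Uc g J l mu ->
  forall x, g x (mu x) + VI f Uc g J l (f x (mu x)) <= VI f Uc g J l x.
Proof.
case: l => [//|l] _ TJ_le [_ roll] x.
by rewrite -(roll x); apply: leeD => //; exact: VI_succ_le.
Qed.

End RolloutBounds.

Theorem proposition2 (R : realType) (X U : Type)
  (f : X -> U -> X) (Uc : X -> set U) (g : X -> U -> \bar R)
  (g_ge0 : forall x u, Uc x u -> 0 <= g x u)
  (A1 : assumption1 f Uc g)
  (S0 : set X) (mu0 : X -> U)
  (mu0_pol : is_policy Uc mu0)
  (S0_inv : forall x, S0 x -> S0 (f x (mu0 x)))
  (l : nat) (hl : (1 <= l)%N)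
  (mut : X -> U)
  (mut_roll : is_rollout f Uc g (JbarS f g S0 mu0) l mut) :
  forall x : X,
    Jpol f g mut x <= VI f Uc g (JbarS f g S0 mu0) l x /\
    VI f Uc g (JbarS f g S0 mu0) l x <= JbarS f g S0 mu0 x.
Proof.
set Jb := JbarS f g S0 mu0.
have excessive : forall y, bellman f Uc g Jb y <= Jb y.
  exact: JbarS_excessive f Uc g g_ge0 S0 mu0 mu0_pol S0_inv.
have lookahead_ge0 : forall y, 0 <= VI f Uc g Jb l y.
  exact: VI_ge0 f Uc g g_ge0 Jb (JbarS_ge0 f Uc g g_ge0 S0 mu0 mu0_pol) l.
have descent := rollout_descent f Uc g Jb l mut hl excessive mut_roll.
move=> x; split; last exact: VI_le_terminal.
exact: Jpol_le_descent f Uc g g_ge0 mut _ mut_roll.1 lookahead_ge0 descent x.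
Qed.
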